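(* Let $\alpha\in\mathbb{R}^2$, $\tau>0$ and $\varepsilon=1+\tau\chi_D$ on $Y_\infty$. Suppose $E\in\mathbf{L}^2_\alpha(Y_\infty)$ satisfies $\mathrm{div}(\varepsilon E)=0$ and $\mathrm{div}(\chi_DE)\ne0$. For $\eta>0$ set $\varepsilon'=\varepsilon+\eta\chi_D$, and let $p\in H^{1,-1}_\alpha(Y_\infty)/\mathbb{R}$ be the unique solution of $\mathrm{div}(\varepsilon'(E+\nabla p))=0$. Then $$\|E\|^2_{\varepsilon,Y_\infty}+\|\nabla p\|^2_{\varepsilon,Y_\infty}\,\frac{\|E\|_D}{\|\nabla p\|_D}\le\|E+\nabla p\|^2_{\varepsilon',Y_\infty}.$$
   Context: Geometry: - $\Lambda\subset\mathbb{R}^2$ is a lattice with fundamental cell $Y$; $Y_\infty=Y\times\mathbb{R}$. - $D\subset Y\times[-h,h]$ is a bounded smooth open set, and $\chi_D$ is its characteristic function (extended periodically). - A function $f$ is $\alpha$-quasi-periodic if $f(x+(\gamma,0))=e^{i\alpha\cdot\gamma}f(x)$ for $\gamma\in\Lambda$. Spaces and norms: - $\mathbf{L}^2_\alpha(Y_\infty)$ is the space of $\alpha$-quasi-periodic vector fields square integrable on $Y_\infty$. - $H^{1,-1}_\alpha(Y_\infty)=\{u\ \alpha\text{-quasi-periodic}:(1+|x_3|^2)^{-1/2}u\in L^2(Y_\infty),\ \nabla u\in L^2(Y_\infty)\}$. - For a weight $w$: $\|f\|^2_{w,Y_\infty}=\int_{Y_\infty}w|f|^2$, and $\|f\|_D^2=\int_D|f|^2$.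 *)

From HB Require Import structures.
From mathcomp Require Import all_boot all_order all_algebra.
From mathcomp Require Import all_classical all_reals all_analysis.
Set Implicit Arguments. Unset Strict Implicit. Unset Printing Implicit Defensive.
Import Order.TTheory GRing.Theory Num.Theory.
Import numFieldNormedType.Exports.
Local Open Scope classical_set_scope.
Local Open Scope ring_scope.

Section Defs.
Variable R : realType.

Definition pt := ((R * R) * R)%type.
(* complex numbers as pairs (real part, imaginary part) *)
Definition C := (R * R)%type.

Definition leb3 := (((@lebesgue_measure R) \x (@lebesgue_measure R)) \x (@lebesgue_measure R))%E.

Definition dot2 (u v : R * R) : R := u.1 * v.1 + u.2 * v.2.

(* multiplication by e^{i theta} *)
Definition crot (th : R) (z : C) : C :=
  (cos th * z.1 - sin th * z.2, sin th * z.1 + cos th * z.2).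

Definition lattice_pt (a b : R * R) (m n : int) : R * R :=
  (m%:~R * a.1 + n%:~R * b.1, m%:~R * a.2 + n%:~R * b.2).

Definition shift (x : pt) (g : R * R) : pt := ((x.1.1 + g.1, x.1.2 + g.2), x.2).

Definition cellY (a b : R * R) : set (R * R) :=
  [set y | exists s t : R, 0 <= s < 1 /\ 0 <= t < 1 /\
     y = (s * a.1 + t * b.1, s * a.2 + t * b.2)].
Definition Yinf (a b : R * R) : set pt := [set x | cellY a b x.1].

Definition qp_scalar (a b alpha : R * R) (f : pt -> C) : Prop :=
  forall (m n : int) (x : pt),
    f (shift x (lattice_pt a b m n)) = crot (dot2 alpha (lattice_pt a b m n)) (f x).
Definition qp_field (a b alpha : R * R) (F : pt -> 'I_3 -> C) : Prop :=
  forall j : 'I_3, qp_scalar a b alpha (fun x => F x j).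

(* pointwise Re and Im of F(x) . conj(G(x)), and |F(x)|^2 *)
Definition dotRe (F G : pt -> 'I_3 -> C) (x : pt) : R :=
  \sum_(j < 3) ((F x j).1 * (G x j).1 + (F x j).2 * (G x j).2).
Definition dotIm (F G : pt -> 'I_3 -> C) (x : pt) : R :=
  \sum_(j < 3) ((F x j).2 * (G x j).1 - (F x j).1 * (G x j).2).
Definition sqn (F : pt -> 'I_3 -> C) (x : pt) : R := dotRe F F x.

Definition addF (F G : pt -> 'I_3 -> C) : pt -> 'I_3 -> C :=
  fun x j => ((F x j).1 + (G x j).1, (F x j).2 + (G x j).2).

Definition wnorm2 (A : set pt) (w : pt -> R) (F : pt -> 'I_3 -> C) : R :=
  fine (\int[leb3]_(x in A) (w x * sqn F x)%:E)%E.

Definition meas_scalar (f : pt -> C) : Prop :=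
  measurable_fun setT (fun x => (f x).1) /\ measurable_fun setT (fun x => (f x).2).
Definition meas_field (F : pt -> 'I_3 -> C) : Prop :=
  forall j, meas_scalar (fun x => F x j).

Definition L2Y (a b : R * R) (F : pt -> 'I_3 -> C) : Prop :=
  meas_field F /\ (\int[leb3]_(x in Yinf a b) (sqn F x)%:E < +oo)%E.
Definition L2alpha (a b alpha : R * R) (F : pt -> 'I_3 -> C) : Prop :=
  qp_field a b alpha F /\ L2Y a b F.

Definition evec (j : 'I_3) : pt :=
  (((j == 0 :> nat)%:R, (j == 1 :> nat)%:R), (j == 2 :> nat)%:R).
Definition partial (j : 'I_3) (f : pt -> R) : pt -> R := fun x => 'D_(evec j) f x.

Fixpoint Ck (k : nat) (f : pt -> R) : Prop :=
  match k with
  | 0 => continuous f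
  | k'.+1 => (forall x, differentiable f x) /\ forall j, Ck k' (partial j f)
  end.
Definition test_fun (phi : pt -> R) : Prop :=
  (forall k, Ck k phi) /\ exists M : R, forall x : pt, M < `|x| -> phi x = 0.

Definition weak_grad (u : pt -> C) (G : pt -> 'I_3 -> C) : Prop :=
  forall phi, test_fun phi -> forall j : 'I_3,
    (\int[leb3]_x ((u x).1 * partial j phi x)%:E
       = - \int[leb3]_x ((G x j).1 * phi x)%:E)%E /\
    (\int[leb3]_x ((u x).2 * partial j phi x)%:E
       = - \int[leb3]_x ((G x j).2 * phi x)%:E)%E.

Definition H1m1 (a b alpha : R * R) (u : pt -> C) (G : pt -> 'I_3 -> C) : Prop :=
  qp_scalar a b alpha u /\ meas_scalar u /\
  (\int[leb3]_(x in Yinf a b)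
      (((1 + x.2 ^+ 2)^-1) * ((u x).1 ^+ 2 + (u x).2 ^+ 2))%:E < +oo)%E /\
  weak_grad u G /\ L2Y a b G.

(* weak form of  div(w F) = 0  on Y_infty:
   int_{Y_infty} w F . conj(grad q) = 0 for all q in H^{1,-1}_alpha *)
Definition div_free (a b alpha : R * R) (w : pt -> R) (F : pt -> 'I_3 -> C) : Prop :=
  forall q Gq, H1m1 a b alpha q Gq ->
    (\int[leb3]_(x in Yinf a b) (w x * dotRe F Gq x)%:E = 0)%E /\
    (\int[leb3]_(x in Yinf a b) (w x * dotIm F Gq x)%:E = 0)%E.

Definition Dper (a b : R * R) (D : set pt) : set pt :=
  [set x | exists m n : int, D (shift x (lattice_pt a b (- m) (- n)))].
Definition chiD (a b : R * R) (D : set pt) : pt -> R := \1_(Dper a b D).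

Definition bounded_set (D : set pt) : Prop := exists M : R, forall x, D x -> `|x| <= M.
Definition smooth_boundary (D : set pt) : Prop :=
  forall x0, (closure D `\` D) x0 ->
    exists (r : R) (psi : pt -> R), 0 < r /\ (forall k, Ck k psi) /\
      (exists j, partial j psi x0 != 0) /\
      forall x, ball x0 r x -> (D x <-> psi x < 0).
Definition smooth_domain (D : set pt) : Prop :=
  open D /\ bounded_set D /\ smooth_boundary D.

End Defs.

(* Write I and J for integrals over the cell Y_infty and over D, and G for the
   gradient of p. On the cell eps = 1 + tau 1_D and eps' = 1 + (tau + eta) 1_D,
   because D lies in a single cell. Testing both weak equations with p gives
     I(E.G) + tau J(E.G) = 0,   I(E.G) + I|G|^2 + (tau + eta) (J(E.G) + J|G|^2) = 0,
   and eliminating I(E.G) and I|G|^2, with u = ||E||_D, v = ||G||_D, s = u / v,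
     RHS - LHS = eta (u^2 + J(E.G) + (J(E.G) + v^2) s).
   Cauchy-Schwarz on D gives J(E.G) >= - u v, so the bracket is at least
   (u - v) (u - v s), which is 0 if v <> 0 and u^2 if v = 0 (then s = 0). *)

From Pilot Require Import Defs.
From HB Require Import structures.
From mathcomp Require Import all_boot all_order all_algebra.
From mathcomp Require Import all_classical all_reals all_analysis.
From mathcomp Require Import measurable_realfun ring lra zify.
Set Implicit Arguments. Unset Strict Implicit. Unset Printing Implicit Defensive.
Import Order.TTheory GRing.Theory Num.Theory.
Import numFieldNormedType.Exports.
Local Open Scope classical_set_scope.
Local Open Scope ring_scope.

(* pt R with the product sigma-algebra on which [leb3] is defined. *)
Local Notation mpt R := ((measurableTypeR R * measurableTypeR R) * measurableTypeR R)%type.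

Section quadratic.
Variable R : rcfType.

Lemma quadratic_ge0_discriminant (A B C : R) : 0 <= A -> 0 <= C ->
  (forall t, 0 < t -> 0 <= t ^+ 2 * A + 2 * t * B + C) -> B < 0 ->
  B ^+ 2 <= A * C.
Proof.
move=> A0 C0 q B0; have [A_eq0|A_gt0] := eqVneq A 0.
  have t_gt0 : 0 < (C + 1) / (- 2 * B) by rewrite divr_gt0 //; lra.
  have := q _ t_gt0; rewrite A_eq0 mulr0 add0r.
  have -> : 2 * ((C + 1) / (- 2 * B)) * B = - (C + 1).
    by field; rewrite ltr0_neq0.
  lra.
have {}A_gt0 : 0 < A by rewrite lt_def A_gt0.
have Bn_gt0 : 0 < - B by lra.
have := q (- B / A) (divr_gt0 Bn_gt0 A_gt0).
have -> : (- B / A) ^+ 2 * A + 2 * (- B / A) * B + C = C - B ^+ 2 / A.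
  by field; rewrite lt0r_neq0.
by rewrite subr_ge0 ler_pdivrMr // mulrC.
Qed.

Lemma quadratic_ge0_sqrt (A B C : R) : 0 <= A -> 0 <= C ->
  (forall t, 0 < t -> 0 <= t ^+ 2 * A + 2 * t * B + C) ->
  - B <= Num.sqrt A * Num.sqrt C.
Proof.
move=> A0 C0 q; have [B0|B0] := leP 0 B.
  by apply: le_trans (mulr_ge0 (sqrtr_ge0 _) (sqrtr_ge0 _)); lra.
rewrite -(ltr0_norm B0) -sqrtr_sqr -sqrtrM // ler_sqrt ?mulr_ge0 //.
exact: quadratic_ge0_discriminant.
Qed.

Lemma energy_inequality (IE IG IEG JE JG JEG tau eta : R) :
  0 < eta -> 0 <= JE -> 0 <= JG ->
  IEG + tau * JEG = 0 -> IEG + IG + (tau + eta) * (JEG + JG) = 0 ->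
  - JEG <= Num.sqrt JE * Num.sqrt JG ->
  (IE + tau * JE) + (IG + tau * JG) * (Num.sqrt JE / Num.sqrt JG)
    <= (IE + 2 * IEG + IG) + (tau + eta) * (JE + 2 * JEG + JG).
Proof.
move=> eta0 JE0 JG0 divE divF cs.
set u := Num.sqrt JE in cs *; set v := Num.sqrt JG in cs *; set s := u / v.
have [u0 v0] : 0 <= u /\ 0 <= v by split; apply: sqrtr_ge0.
have s0 : 0 <= s by rewrite divr_ge0.
have JEu : JE = u ^+ 2 by rewrite sqr_sqrtr.
have JGv : JG = v ^+ 2 by rewrite sqr_sqrtr.
suff gap0 : 0 <= u ^+ 2 + JEG + (JEG + v ^+ 2) * s.
  have -> : IEG = - tau * JEG by lra.
  have -> : IG = tau * JEG - (tau + eta) * (JEG + JG) by lra.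
  rewrite -subr_ge0 JEu JGv.
  set gap := (X in 0 <= X).
  have -> : gap = eta * (u ^+ 2 + JEG + (JEG + v ^+ 2) * s) by rewrite /gap; ring.
  exact: mulr_ge0 (ltW eta0) gap0.
have [v_eq0|v_neq0] := eqVneq v 0.
  by rewrite /s v_eq0 invr0 !mulr0 addr0; move: cs; rewrite v_eq0 mulr0; nra.
have sv : s * v = u by rewrite /s divfK.
nra.
Qed.

End quadratic.

Section cell.
Variables (R : realType) (a b : R * R).
Hypothesis det_neq0 : a.1 * b.2 - a.2 * b.1 != 0.

Definition coord_a (y : R * R) : R :=
  (y.1 * b.2 - y.2 * b.1) / (a.1 * b.2 - a.2 * b.1).
Definition coord_b (y : R * R) : R :=
  (a.1 * y.2 - a.2 * y.1) / (a.1 * b.2 - a.2 * b.1).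

Lemma cellYE y : cellY a b y <-> 0 <= coord_a y < 1 /\ 0 <= coord_b y < 1.
Proof.
rewrite /coord_a /coord_b; split.
  move=> [s [t [s01 [t01 ->]]]] /=.
  have -> : ((s * a.1 + t * b.1) * b.2 - (s * a.2 + t * b.2) * b.1) /
    (a.1 * b.2 - a.2 * b.1) = s by field.
  by have -> : (a.1 * (s * a.2 + t * b.2) - a.2 * (s * a.1 + t * b.1)) /
    (a.1 * b.2 - a.2 * b.1) = t by field.
move=> [s01 t01]; do 2 eexists; split; first exact: s01; split; first exact: t01.
by case: y {s01 t01} => y1 y2 /=; congr pair; field.
Qed.

Lemma coord_a_lattice y m n :
  coord_a (y.1 + (lattice_pt a b m n).1, y.2 + (lattice_pt a b m n).2) =
  coord_a y + m%:~R.
Proof. by rewrite /coord_a /=; field. Qed.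

Lemma coord_b_lattice y m n :
  coord_b (y.1 + (lattice_pt a b m n).1, y.2 + (lattice_pt a b m n).2) =
  coord_b y + n%:~R.
Proof. by rewrite /coord_b /=; field. Qed.


Lemma measurable_Yinf : measurable (Yinf a b : set (mpt R)).
Proof.
have mca : measurable_fun setT (fun x : mpt R => coord_a x.1).
  by apply: measurable_funM => //; apply: measurable_funB;
    apply: measurable_funM => //; apply: measurableT_comp.
have mcb : measurable_fun setT (fun x : mpt R => coord_b x.1).
  by apply: measurable_funM => //; apply: measurable_funB;
    apply: measurable_funM => //; apply: measurableT_comp.
have -> : Yinf a b = (fun x : mpt R => coord_a x.1) @^-1` `[0, 1[ `&`
                     (fun x : mpt R => coord_b x.1) @^-1` `[0, 1[.
  by apply/seteqP; split => x; rewrite /Yinf /= !in_itv /= => /cellYE.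
by apply: measurableI; rewrite -[X in measurable X]setTI;
  [apply: mca | apply: mcb] => //; exact: measurable_itv.
Qed.

Lemma cellY_lattice_translate y m n : cellY a b y ->
  cellY a b (y.1 + (lattice_pt a b m n).1, y.2 + (lattice_pt a b m n).2) ->
  m = 0 /\ n = 0.
Proof.
have int_eq0 (k : int) : -1 < (k%:~R : R) < 1 -> k = 0.
  move=> /andP[k_gt k_lt]; have : (- k)%:~R < 1 :> R by rewrite mulrNz; lra.
  by move: k_lt; rewrite !ltrz1; lia.
move=> /cellYE [ya yb] /cellYE; rewrite coord_a_lattice coord_b_lattice => -[ya' yb'].
by split; apply: int_eq0; apply/andP; split; lra.
Qed.

Lemma chiD_Yinf (D : set (pt R)) x : D `<=` Yinf a b -> Yinf a b x ->
  chiD a b D x = \1_D x.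
Proof.
move=> DY Yx; have shift0 : Defs.shift x (lattice_pt a b 0 0) = x.
  by case: x {Yx} => -[x1 x2] x3; rewrite /Defs.shift /lattice_pt /= !mul0r !addr0.
suff DperE : (x \in Dper a b D) = (x \in D) by rewrite /chiD !indicE DperE.
apply/idP/idP => [/set_mem [m [n Dx']]|/set_mem Dx]; apply/mem_set; last first.
  by exists 0, 0; rewrite oppr0 shift0.
have [m0 n0] := cellY_lattice_translate Yx (DY _ Dx').
by move: Dx'; rewrite m0 n0 shift0.
Qed.

End cell.

Section open_measurable.
Variable R : realType.

Definition rat_cube (q1 q2 q3 r : rat) : set (pt R) :=
  ([set` `]ratr q1 - ratr r, ratr q1 + ratr r[] `*`
   [set` `]ratr q2 - ratr r, ratr q2 + ratr r[]) `*`
   [set` `]ratr q3 - ratr r, ratr q3 + ratr r[].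

(* Indexing by all of rat^4, with empty cubes for those not inside D, is what lets
   [bigcupT_measurable_rat] apply. *)
Definition rat_cube_in (D : set (pt R)) (q1 q2 q3 r : rat) : set (pt R) :=
  if `[< rat_cube q1 q2 q3 r `<=` D >] then rat_cube q1 q2 q3 r else set0.

Lemma open_bigcup_rat_cube (D : set (pt R)) : open D ->
  D = \bigcup_q1 \bigcup_q2 \bigcup_q3 \bigcup_r rat_cube_in D q1 q2 q3 r.
Proof.
move=> oD; apply/seteqP; split => [x Dx|x]; last first.
  move=> [q1 _ [q2 _ [q3 _ [r _]]]].
  by rewrite /rat_cube_in; case: asboolP => [cubeD /cubeD|].
have /nbhs_ballP [e /= e0 De] := oD x Dx.
have rat_near (y d : R) : 0 < d -> exists q : rat, y - d < ratr q < y + d.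
  move=> d0; have /rat_in_itvoo [q] : y - d < y + d by lra.
  by rewrite in_itv /=; exists q.
have [r /andP [r0 re]] : exists r : rat, (0 : R) < ratr r < e / 2.
  have /rat_in_itvoo [r] : 0 < e / 2 by lra.
  by rewrite in_itv /=; exists r.
have [q1 /andP [q11 q12]] := rat_near x.1.1 _ r0.
have [q2 /andP [q21 q22]] := rat_near x.1.2 _ r0.
have [q3 /andP [q31 q32]] := rat_near x.2 _ r0.
exists q1 => //; exists q2 => //; exists q3 => //; exists r => //.
have cubeD : rat_cube q1 q2 q3 r `<=` D.
  move=> [[y1 y2] y3]; rewrite /rat_cube /= !in_itv /=.
  move=> -[[/andP [y11 y12] /andP [y21 y22]] /andP [y31 y32]].
  apply: De; rewrite /ball /= /prod_ball /= /ball /= /prod_ball /= /ball /=.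
  by rewrite !ltr_norml; split; [split|]; apply/andP; split; lra.
rewrite /rat_cube_in asboolT // /rat_cube /= !in_itv /=.
by split; [split|]; apply/andP; split; lra.
Qed.

Lemma open_measurable3 (D : set (pt R)) : open D -> measurable (D : set (mpt R)).
Proof.
move=> /open_bigcup_rat_cube ->.
do 4 (apply: bigcupT_measurable_rat => ?).
rewrite /rat_cube_in; case: asboolP => _ //.
by apply: measurableX; [apply: measurableX|]; exact: measurable_itv.
Qed.

End open_measurable.

Section pointwise.
Variable R : realType.
Implicit Types (F G : pt R -> 'I_3 -> C R) (x : pt R).

Lemma sqn_ge0 F x : 0 <= sqn F x.
Proof. by apply: sumr_ge0 => j _; rewrite -!expr2 addr_ge0 ?sqr_ge0. Qed.

Lemma sqn_addF F G x : sqn (addF F G) x = sqn F x + 2 * dotRe F G x + sqn G x.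
Proof.
by rewrite /sqn /dotRe /addF mulr_sumr -!big_split; apply: eq_bigr => j _ /=; ring.
Qed.

Lemma dotRe_addFl F G x : dotRe (addF F G) G x = dotRe F G x + sqn G x.
Proof. by rewrite /sqn /dotRe /addF -big_split; apply: eq_bigr => j _ /=; ring. Qed.

Lemma quadratic_sqn_ge0 F G x t : 0 <= t ^+ 2 * sqn F x + 2 * t * dotRe F G x + sqn G x.
Proof.
rewrite /sqn /dotRe !mulr_sumr -!big_split; apply: sumr_ge0 => j _ /=.
set u1 := (F x j).1; set u2 := (F x j).2; set v1 := (G x j).1; set v2 := (G x j).2.
have -> : t ^+ 2 * (u1 * u1 + u2 * u2) + 2 * t * (u1 * v1 + u2 * v2) + (v1 * v1 + v2 * v2)
  = (t * u1 + v1) ^+ 2 + (t * u2 + v2) ^+ 2 by ring.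
by rewrite addr_ge0 ?sqr_ge0.
Qed.

Lemma normr_dotRe_le F G x : `|dotRe F G x| <= sqn F x + sqn G x.
Proof.
rewrite /sqn /dotRe -big_split; apply: le_trans (ler_norm_sum _ _ _) _.
apply: ler_sum => j _ /=; rewrite ler_norml.
have := sqr_ge0 ((F x j).1 + (G x j).1); have := sqr_ge0 ((F x j).1 - (G x j).1).
have := sqr_ge0 ((F x j).2 + (G x j).2); have := sqr_ge0 ((F x j).2 - (G x j).2).
by move=> *; apply/andP; split; nra.
Qed.


Lemma measurable_dotRe F G : meas_field F -> meas_field G ->
  measurable_fun setT (dotRe F G : mpt R -> R).
Proof.
move=> mF mG; apply: measurable_sum => j.
have [? ?] := mF j; have [? ?] := mG j.
by apply: measurable_funD; apply: measurable_funM.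
Qed.

End pointwise.

Section field_integrals.
Variable R : realType.
Variables (mu : {measure set (mpt R) -> \bar R}) (A : set (mpt R)).
Hypothesis mA : measurable A.
Local Notation integrable f := (mu.-integrable A (EFin \o f)).

Lemma integrable_sqn F : meas_field F ->
  (\int[mu]_(x in A) (sqn F x)%:E < +oo)%E -> integrable (sqn F).
Proof.
move=> mF finF; apply/integrableP; split.
  apply/measurable_EFinP.
  exact: measurable_funS measurableT _ (measurable_dotRe mF mF).
rewrite (@eq_integral _ _ _ _ _ (fun x : mpt R => (sqn F x)%:E)) // => x _.
by rewrite /= ger0_norm ?sqn_ge0.
Qed.

Lemma Rintegral_indic_weight (D : set (mpt R)) (c : R) (f : pt R -> R) :
  measurable D -> D `<=` A -> integrable f ->
  \int[mu]_(x in A) ((1 + c * \1_D x) * f x) =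
  \int[mu]_(x in A) f x + c * \int[mu]_(x in D) f x.
Proof.
move=> mD DA iF.
have fD : \int[mu]_(x in A) (\1_D x * f x) = \int[mu]_(x in D) f x.
  rewrite -[in RHS](setIidr DA) Rintegral_mkcondr patch_indic.
  by apply: eq_Rintegral => x _; rewrite /= mulrC.
have iFD : integrable (fun x => \1_D x * f x).
  have : integrable (f \_ D).
    rewrite -restrict_EFin -integrable_restrict // setIidr //.
    exact: integrableS iF.
  by apply: eq_integrable => // x _; rewrite /= patch_indic /= mulrC.
under eq_Rintegral do rewrite mulrDl mul1r -mulrA.
by rewrite RintegralD ?RintegralZl ?fD //; exact: (integrableZl mA c iFD).
Qed.

Variables F G : pt R -> 'I_3 -> C R.
Hypotheses (mF : meas_field F) (mG : meas_field G).
Hypotheses (iF : integrable (sqn F)) (iG : integrable (sqn G)).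

Lemma integrable_dotRe : integrable (dotRe F G).
Proof.
apply: (le_integrable mA) (integrableD mA iF iG).
  apply/measurable_EFinP.
  exact: measurable_funS measurableT _ (measurable_dotRe mF mG).
move=> x _ /=; rewrite lee_fin (ger0_norm (addr_ge0 (sqn_ge0 _ _) (sqn_ge0 _ _))).
exact: normr_dotRe_le.
Qed.

Let i2FG : integrable (fun x => 2 * dotRe F G x) := integrableZl mA 2 integrable_dotRe.

Lemma integrable_sqn_addF : integrable (sqn (addF F G)).
Proof.
apply: (eq_integrable mA _ _ _ (integrableD mA (integrableD mA iF i2FG) iG)).
by move=> x _; rewrite /= sqn_addF.
Qed.

Lemma integrable_dotRe_addFl : integrable (dotRe (addF F G) G).
Proof.
apply: (eq_integrable mA _ _ _ (integrableD mA integrable_dotRe iG)).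
by move=> x _; rewrite /= dotRe_addFl.
Qed.

Lemma Rintegral_sqn_addF : \int[mu]_(x in A) sqn (addF F G) x =
  \int[mu]_(x in A) sqn F x + 2 * \int[mu]_(x in A) dotRe F G x +
  \int[mu]_(x in A) sqn G x.
Proof.
under eq_Rintegral do rewrite sqn_addF.
rewrite (RintegralD mA (integrableD mA iF i2FG) iG) (RintegralD mA iF i2FG).
by rewrite (RintegralZl _ mA integrable_dotRe).
Qed.

Lemma Rintegral_dotRe_addFl : \int[mu]_(x in A) dotRe (addF F G) G x =
  \int[mu]_(x in A) dotRe F G x + \int[mu]_(x in A) sqn G x.
Proof.
under eq_Rintegral do rewrite dotRe_addFl.
exact: RintegralD mA integrable_dotRe iG.
Qed.

Lemma Rintegral_dotRe_ge : - (\int[mu]_(x in A) dotRe F G x) <=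
  Num.sqrt (\int[mu]_(x in A) sqn F x) * Num.sqrt (\int[mu]_(x in A) sqn G x).
Proof.
apply: quadratic_ge0_sqrt; try by apply: Rintegral_ge0 => x _; exact: sqn_ge0.
move=> t _.
have i1 : integrable (fun x => t ^+ 2 * sqn F x) := integrableZl mA _ iF.
have i2 : integrable (fun x => 2 * t * dotRe F G x) := integrableZl mA _ integrable_dotRe.
rewrite -(RintegralZl _ mA iF) -(RintegralZl _ mA integrable_dotRe).
rewrite -(RintegralD mA i1 i2) -(RintegralD mA (integrableD mA i1 i2) iG).
by apply: Rintegral_ge0 => x _; exact: quadratic_sqn_ge0.
Qed.

End field_integrals.

Section weighted_energy.
Variable R : realType.
Variables (mu : {measure set (mpt R) -> \bar R}) (Y D : set (mpt R)).
Hypotheses (mY : measurable Y) (mD : measurable D) (DY : D `<=` Y).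
Variables E G : pt R -> 'I_3 -> C R.
Hypotheses (mE : meas_field E) (mG : meas_field G).
Hypotheses (iE : mu.-integrable Y (EFin \o sqn E))
  (iG : mu.-integrable Y (EFin \o sqn G)).

Lemma weighted_energy_inequality (tau eta : R) (eps eps' : pt R -> R) :
  0 < eta ->
  {in Y, forall x, eps x = 1 + tau * \1_D x} ->
  {in Y, forall x, eps' x = 1 + (tau + eta) * \1_D x} ->
  \int[mu]_(x in Y) (eps x * dotRe E G x) = 0 ->
  \int[mu]_(x in Y) (eps' x * dotRe (addF E G) G x) = 0 ->
  \int[mu]_(x in Y) (eps x * sqn E x) + \int[mu]_(x in Y) (eps x * sqn G x) *
    (Num.sqrt (\int[mu]_(x in D) sqn E x) / Num.sqrt (\int[mu]_(x in D) sqn G x))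
  <= \int[mu]_(x in Y) (eps' x * sqn (addF E G) x).
Proof.
move=> eta0 epsE eps'E divE divF.
have iED := integrableS mY mD DY iE; have iGD := integrableS mY mD DY iG.
have weight c w f : {in Y, forall x, w x = 1 + c * \1_D x} ->
    mu.-integrable Y (EFin \o f) ->
  \int[mu]_(x in Y) (w x * f x) = \int[mu]_(x in Y) f x + c * \int[mu]_(x in D) f x.
  move=> wE iF; rewrite -Rintegral_indic_weight //.
  by apply: eq_Rintegral => x Yx; rewrite wE.
rewrite (weight _ _ _ epsE iE) (weight _ _ _ epsE iG).
rewrite (weight _ _ _ eps'E (integrable_sqn_addF mY mE mG iE iG)).
rewrite (Rintegral_sqn_addF mY mE mG iE iG) (Rintegral_sqn_addF mD mE mG iED iGD).
move: divE divF; rewrite (weight _ _ _ epsE (integrable_dotRe mY mE mG iE iG)).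
rewrite (weight _ _ _ eps'E (integrable_dotRe_addFl mY mE mG iE iG)).
rewrite (Rintegral_dotRe_addFl mY mE mG iE iG) (Rintegral_dotRe_addFl mD mE mG iED iGD).
move=> divE divF; apply: (energy_inequality _ eta0 _ _ divE divF).
- by apply: Rintegral_ge0 => x _; exact: sqn_ge0.
- by apply: Rintegral_ge0 => x _; exact: sqn_ge0.
- exact: Rintegral_dotRe_ge.
Qed.

End weighted_energy.

Theorem lemmaA2 (R : realType) (a b : R * R) (h : R) (D : set (pt R))
  (alpha : R * R) (tau eta : R) (E : pt R -> 'I_3 -> C R)
  (p : pt R -> C R) (Gp : pt R -> 'I_3 -> C R) :
  a.1 * b.2 - a.2 * b.1 != 0 ->
  0 < h ->
  smooth_domain D ->
  D `<=` [set x | cellY a b x.1 /\ - h <= x.2 <= h] ->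
  0 < tau ->
  let eps := fun x => 1 + tau * chiD a b D x in
  L2alpha a b alpha E ->
  div_free a b alpha eps E ->
  ~ div_free a b alpha (chiD a b D) E ->
  0 < eta ->
  let eps' := fun x => eps x + eta * chiD a b D x in
  H1m1 a b alpha p Gp ->
  div_free a b alpha eps' (addF E Gp) ->
  wnorm2 (Yinf a b) eps E
    + wnorm2 (Yinf a b) eps Gp
      * (Num.sqrt (wnorm2 D (fun=> 1) E) / Num.sqrt (wnorm2 D (fun=> 1) Gp))
  <= wnorm2 (Yinf a b) eps' (addF E Gp).
Proof.
move=> det_neq0 _ [oD _] DinY _ eps [_ [mE finE]] divE _ eta0 eps'.
move=> Hp divF; have [_ [_ [_ [_ [mG finG]]]]] := Hp.
have DY : D `<=` Yinf a b by move=> x /DinY [].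
have mY := measurable_Yinf det_neq0.
have wnorm2_D F : wnorm2 D (fun=> 1) F = \int[@leb3 R]_(x in D) sqn F x.
  by apply: eq_Rintegral => x _; rewrite mul1r.
rewrite !wnorm2_D.
apply: (weighted_energy_inequality mY (open_measurable3 oD) DY mE mG
  (integrable_sqn mE finE) (integrable_sqn mG finG) eta0).
- by move=> x /set_mem Yx; rewrite /eps chiD_Yinf.
- by move=> x /set_mem Yx; rewrite /eps' /eps chiD_Yinf //; ring.
- by rewrite /Rintegral (divE _ _ Hp).1.
- by rewrite /Rintegral (divF _ _ Hp).1.
Qed.
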